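(* Let $(E,\mathcal{I}_1),\dots,(E,\mathcal{I}_k)$ be matroids on a common finite ground set $E$ with $|E|=\sum_{i\in[k]}\mathrm{rank}(\mathcal{I}_i)$, let $w_i:E\to\mathbb{R}_+$ be weights, and let $\mathrm{Op}^{(1)},\mathrm{Op}^{(2)}\in\{\max,\min,\sum\}$. Let $w^{\max}=\max_{i\in[k]}\max_{e\in E}w_i(e)$, define $\widetilde{\min}=\max$, $\widetilde{\max}=\min$, $\widetilde{\sum}=\sum$, and define $w_i'(e)=\frac{|E|}{\mathrm{rank}(\mathcal{I}_i)}w^{\max}-w_i(e)$ if $\mathrm{Op}^{(1)}\in\{\min,\max\}$ and $\mathrm{Op}^{(2)}=\sum$, and $w_i'(e)=w^{\max}-w_i(e)$ otherwise. Then a feasible partition $(I_1,\dots,I_k)$ of $E$ is an optimal solution of the minimum $(\mathrm{Op}^{(1)},\mathrm{Op}^{(2)})$-value matroid partitioning problem for $(E,(\mathcal{I}_i,w_i)_{i\in[k]})$ if and only if it is an optimal solution of the maximum $(\widetilde{\mathrm{Op}^{(1)}},\widetilde{\mathrm{Op}^{(2)}})$-value matroid partitioning problem for $(E,(\mathcal{I}_i,w_i')_{i\in[k]})$.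
   Context: A feasible partition of $E$ with respect to matroids $(E,\mathcal{I}_i)$, $i\in[k]$, is a tuple $(I_1,\dots,I_k)$ of pairwise disjoint nonempty sets with $\bigcup_i I_i=E$ and $I_i\in\mathcal{I}_i$. The $(\mathrm{Op}^{(1)},\mathrm{Op}^{(2)})$-value of $(I_1,\dots,I_k)$ is $\mathrm{Op}^{(1)}_{i\in[k]}\mathrm{Op}^{(2)}_{e\in I_i}w_i(e)$. The minimum (resp. maximum) $(\mathrm{Op}^{(1)},\mathrm{Op}^{(2)})$-value matroid partitioning problem asks for a feasible partition minimizing (resp. maximizing) this value. Under $|E|=\sum_i\mathrm{rank}(\mathcal{I}_i)$ every feasible partition consists of bases. *)

From HB Require Import structures.
From mathcomp Require Import all_boot all_order all_algebra.
Set Implicit Arguments. Unset Strict Implicit. Unset Printing Implicit Defensive.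
Import Order.TTheory GRing.Theory Num.Theory.
Local Open Scope ring_scope.

Definition is_matroid (E : finType) (F : {set {set E}}) : Prop :=
  [/\ set0 \in F,
      (forall A B : {set E}, B \in F -> A \subset B -> A \in F) &
      (forall A B : {set E}, A \in F -> B \in F -> (#|A| < #|B|)%N ->
         exists2 e, e \in B :\: A & e |: A \in F)].

Definition mrank (E : finType) (F : {set {set E}}) : nat :=
  \max_(A in F) #|A|.

Inductive Op := OpMax | OpMin | OpSum.

Definition op_tilde (o : Op) : Op :=
  match o with OpMax => OpMin | OpMin => OpMax | OpSum => OpSum end.

(* Applying Op to a finite (multi)set of reals, given as a sequence.
   max / min are only used on nonempty sequences (the value on [::] is 0). *)
Definition applyOp (R : realFieldType) (o : Op) (s : seq R) : R :=
  match o with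
  | OpSum => \sum_(x <- s) x
  | OpMax => match s with [::] => 0 | x :: t => \big[Num.max/x]_(y <- t) y end
  | OpMin => match s with [::] => 0 | x :: t => \big[Num.min/x]_(y <- t) y end
  end.

Definition feasible_partition (E : finType) (k : nat)
    (M : 'I_k -> {set {set E}}) (P : 'I_k -> {set E}) : Prop :=
  [/\ (forall i j, i != j -> [disjoint P i & P j]),
      (forall i, P i != set0),
      \bigcup_(i < k) P i = [set: E] &
      (forall i, P i \in M i)].

Definition op_value (R : realFieldType) (E : finType) (k : nat)
    (w : 'I_k -> E -> R) (o1 o2 : Op) (P : 'I_k -> {set E}) : R :=
  applyOp o1 [seq applyOp o2 [seq w i e | e <- enum (P i)] | i <- enum 'I_k].

Definition optimal_min (R : realFieldType) (E : finType) (k : nat)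
    (M : 'I_k -> {set {set E}}) (w : 'I_k -> E -> R) (o1 o2 : Op)
    (P : 'I_k -> {set E}) : Prop :=
  feasible_partition M P /\
  forall Q, feasible_partition M Q -> op_value w o1 o2 P <= op_value w o1 o2 Q.

Definition optimal_max (R : realFieldType) (E : finType) (k : nat)
    (M : 'I_k -> {set {set E}}) (w : 'I_k -> E -> R) (o1 o2 : Op)
    (P : 'I_k -> {set E}) : Prop :=
  feasible_partition M P /\
  forall Q, feasible_partition M Q -> op_value w o1 o2 Q <= op_value w o1 o2 P.

(* w^max = max_i max_e w_i(e)  (weights are nonnegative, so 0 is a neutral seed) *)
Definition wmax (R : realFieldType) (E : finType) (k : nat) (w : 'I_k -> E -> R) : R :=
  \big[Num.max/0]_(i < k) \big[Num.max/0]_(e : E) w i e.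

Definition is_minmax (o : Op) : bool :=
  match o with OpSum => false | _ => true end.

Definition wprime (R : realFieldType) (E : finType) (k : nat)
    (M : 'I_k -> {set {set E}}) (w : 'I_k -> E -> R) (o1 o2 : Op)
    (i : 'I_k) (e : E) : R :=
  if is_minmax o1 && ~~ is_minmax o2 then
    (#|E|%:R / (mrank (M i))%:R) * wmax w - w i e
  else wmax w - w i e.

(** Every feasible partition Q consists of bases: |Q i| <= rank(M i) and the
    sizes add up to |E|, the sum of the ranks. Writing w'_i = c_i - w_i, the
    identities c - max = min (c - _), c - min = max (c - _) and linearity of
    sums give value'(Q) = C - value(Q). The inner constants are Op2 applied to
    rank(M i) copies of c_i, and when Op1 is max or min the factor
    |E| / rank(M i) in c_i makes them independent of i; so C does not depend
    on Q, and minimising value is maximising value'. *)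
From HB Require Import structures.
From mathcomp Require Import all_boot all_order all_algebra.
Set Implicit Arguments. Unset Strict Implicit. Unset Printing Implicit Defensive.
Import Order.TTheory GRing.Theory Num.Theory.
Local Open Scope ring_scope.

Section ApplyOp.

Variable R : realFieldType.

Lemma applyOp_nseq (o : Op) (n : nat) (c : R) :
  (0 < n)%N -> applyOp o (nseq n c) = if o is OpSum then c *+ n else c.
Proof.
case: o => /=; last by move=> _; elim: n => [|n IHn]; rewrite ?big_nil //= big_cons IHn mulrS.
all: case: n => // n _ /=; by elim: n => [|n IHn]; rewrite ?big_nil //= big_cons IHn ?maxxx ?minxx.
Qed.

Lemma applyOp_tilde_sub (T : Type) (o : Op) (d y : T -> R) (s : seq T) :
  (is_minmax o -> forall i j, d i = d j) ->
  applyOp (op_tilde o) [seq d i - y i | i <- s] =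
  applyOp o [seq d i | i <- s] - applyOp o [seq y i | i <- s].
Proof.
case: o => /= [/(_ isT) dconst|/(_ isT) dconst|_]; last by rewrite !big_map sumrB.
- case: s => [|x s] /=; first by rewrite subr0.
  rewrite !big_map (big1_idem (maxxx (d x))) => [|i _]; last exact: dconst.
  have sub_max : {morph (fun a => d x - a) : a b / Num.max a b >-> Num.min a b}.
    by move=> a b /=; rewrite oppr_max addr_minr.
  rewrite (big_morph _ sub_max (erefl _)).
  by apply: eq_bigr => i _; rewrite (dconst i x).
- case: s => [|x s] /=; first by rewrite subr0.
  rewrite !big_map (big1_idem (minxx (d x))) => [|i _]; last exact: dconst.
  have sub_min : {morph (fun a => d x - a) : a b / Num.min a b >-> Num.max a b}.
    by move=> a b /=; rewrite oppr_min addr_maxr.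
  rewrite (big_morph _ sub_min (erefl _)).
  by apply: eq_bigr => i _; rewrite (dconst i x).
Qed.

End ApplyOp.

Section FeasiblePartition.

Variables (E : finType) (k : nat) (M : 'I_k -> {set {set E}}) (P : 'I_k -> {set E}).
Hypothesis feasP : feasible_partition M P.

Lemma sum_card_feasible_partition : (\sum_(i < k) #|P i|)%N = #|E|.
Proof.
case: feasP => disjP _ coverP _.
rewrite -cardsT -coverP -sum1_card (partition_disjoint_bigcup _ _ disjP).
by apply: eq_bigr => i _; rewrite sum1_card.
Qed.

Lemma card_feasible_part_le_mrank i : (#|P i| <= mrank (M i))%N.
Proof. by case: feasP => _ _ _ /(_ i) PiM; apply: leq_bigmax_cond. Qed.

Lemma mrank_gt0 i : (0 < mrank (M i))%N.
Proof.
case: feasP => _ /(_ i) Pi_neq0 _ _.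
by apply: leq_trans (card_feasible_part_le_mrank i); rewrite card_gt0.
Qed.

Lemma card_feasible_part_eq_mrank :
  #|E| = (\sum_(i < k) mrank (M i))%N -> forall i, #|P i| = mrank (M i).
Proof.
move=> cardE_ranks i.
have le_rank j : (#|P j| <= mrank (M j) ?= iff (#|P j| == mrank (M j)))%N.
  exact/leqif_eq/card_feasible_part_le_mrank.
have := (leqif_sum (P := xpredT) (fun j _ => le_rank j)).2.
by rewrite sum_card_feasible_partition cardE_ranks eqxx => /esym/forallP/(_ i)/eqP.
Qed.

End FeasiblePartition.

Section TransformedWeights.

Variables (R : realFieldType) (E : finType) (k : nat).
Variables (M : 'I_k -> {set {set E}}) (w : 'I_k -> E -> R) (o1 o2 : Op).

Definition wshift (i : 'I_k) : R :=
  if is_minmax o1 && ~~ is_minmax o2 then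
    (#|E|%:R / (mrank (M i))%:R) * wmax w
  else wmax w.

Lemma wprimeE i e : wprime M w o1 o2 i e = wshift i - w i e.
Proof. by rewrite /wprime /wshift; case: ifP. Qed.

Definition wshift_value : R :=
  applyOp o1 [seq applyOp o2 (nseq (mrank (M i)) (wshift i)) | i <- enum 'I_k].

Lemma op_value_wprime Q :
  #|E| = (\sum_(i < k) mrank (M i))%N -> feasible_partition M Q ->
  op_value (wprime M w o1 o2) (op_tilde o1) (op_tilde o2) Q =
  wshift_value - op_value w o1 o2 Q.
Proof.
move=> cardE_ranks feasQ.
have inner i : applyOp (op_tilde o2) [seq wprime M w o1 o2 i e | e <- enum (Q i)] =
    applyOp o2 (nseq (mrank (M i)) (wshift i)) - applyOp o2 [seq w i e | e <- enum (Q i)].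
  rewrite (eq_map (wprimeE i)) applyOp_tilde_sub //.
  have -> : [seq wshift i | _ <- enum (Q i)] = nseq #|Q i| (wshift i).
    by rewrite cardE; elim: (enum (Q i)) => //= e s ->.
  by rewrite (card_feasible_part_eq_mrank feasQ cardE_ranks).
rewrite /op_value /wshift_value (eq_map inner).
have scaled_shift i : (#|E|%:R / (mrank (M i))%:R * wmax w) *+ mrank (M i) = #|E|%:R * wmax w.
  by rewrite -mulr_natr mulrAC divfK // pnatr_eq0 -lt0n (mrank_gt0 feasQ).
apply: applyOp_tilde_sub => o1_minmax i j.
rewrite !applyOp_nseq ?(mrank_gt0 feasQ) // /wshift o1_minmax.
by case: o2 => //=; rewrite !scaled_shift.
Qed.

End TransformedWeights.

Theorem mainTheorem2 (R : realFieldType) (E : finType) (k : nat)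
    (M : 'I_k -> {set {set E}}) (w : 'I_k -> E -> R) (o1 o2 : Op) :
  (forall i, is_matroid (M i)) ->
  #|E| = (\sum_(i < k) mrank (M i))%N ->
  (forall i e, 0 <= w i e) ->
  forall P : 'I_k -> {set E},
    optimal_min M w o1 o2 P <->
    optimal_max M (wprime M w o1 o2) (op_tilde o1) (op_tilde o2) P.
Proof.
move=> _ cardE_ranks _ P.
have value' := fun Q => op_value_wprime w o1 o2 (Q := Q) cardE_ranks.
split=> -[feasP optP]; split=> // Q feasQ.
- by rewrite (value' _ feasP) (value' _ feasQ) lerD2l lerN2 optP.
- by move: (optP _ feasQ); rewrite (value' _ feasP) (value' _ feasQ) lerD2l lerN2.
Qed.
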